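(* Let $G$ be a finite group. The graph $\mathcal{P}^*(G)/\mathtt{N}$ is a tame and pseudo-covering quotient of $\mathcal{P}^*(G)$. In particular $\mathcal{P}^*(G)$ and $\mathcal{P}^*(G)/\mathtt{N}$ have the same number of connected components.
   Context: The power graph $\mathcal{P}(G)$ has vertex set $G$, distinct $x,y$ adjacent iff one is a positive integer power of the other; $\mathcal{P}^*(G)$ is its subgraph induced on $G\setminus\{1\}$; graphs carry a loop at each vertex. $x\mathtt{N}y$ iff $x,y$ have the same closed neighbourhood in $\mathcal{P}(G)$. For a graph $\Gamma$ and equivalence $\sim$ on its vertices, $\Gamma/\sim$ has vertex set the classes, classes joined iff some representatives are joined. The quotient is tame (resp. pseudo-covering) if the projection $x\mapsto[x]$ is: tame means $[x]=[y]$ implies $x,y$ are joined by a path in $\Gamma$; pseudo-covering means surjective and locally strong, i.e. whenever $\{[x_1],[x_2]\}$ is an edge, every $\tilde x_1\in[x_1]$ is adjacent (or equal) to some $\tilde x_2\in[x_2]$. *)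

From mathcomp Require Import all_boot all_fingroup.
From mathcomp Require Import boolp.
From Stdlib Require Import Relations.

Set Implicit Arguments.
Unset Strict Implicit.
Unset Printing Implicit Defensive.

Local Open Scope group_scope.

Section Graphs.
Variable T : finType.
(* A graph is given by a vertex predicate V and an adjacency relation E
   (restricted to V); every vertex carries a loop. *)
Variables (V : T -> Prop) (E : T -> T -> Prop).

Definition gedge (a b : T) : Prop := V a /\ V b /\ E a b.

Definition joined (x y : T) : Prop := clos_refl_trans T gedge x y.

Definition component (x : T) : {set T} := [set y | `[< joined x y >] ].

Definition ncomp : nat :=
  #| [set component x | x in [set x | `[< V x >] ]] |.

Variable eqv : T -> T -> Prop.

Definition qcls (x : T) : {set T} := [set y | `[< V y /\ eqv x y >] ].

Definition qV (C : {set T}) : Prop := exists x, V x /\ C = qcls x.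

Definition qE (C D : {set T}) : Prop :=
  exists x y, x \in C /\ y \in D /\ (x = y \/ E x y).

Definition tame : Prop :=
  forall x y, V x -> V y -> qcls x = qcls y -> joined x y.

Definition pseudo_covering : Prop :=
  (forall C, qV C -> exists x, V x /\ qcls x = C) /\
  (forall x1 x2, V x1 -> V x2 -> qE (qcls x1) (qcls x2) ->
     forall y1, y1 \in qcls x1 ->
       exists y2, y2 \in qcls x2 /\ (y1 = y2 \/ E y1 y2)).

End Graphs.

Section PowerGraph.
Variable gT : finGroupType.

Definition is_pow (x y : gT) : Prop := exists n : nat, (0 < n)%N /\ y = x ^+ n.

Definition padj (x y : gT) : Prop := x <> y /\ (is_pow x y \/ is_pow y x).

Definition cnbhd (x z : gT) : Prop := z = x \/ padj x z.

Definition relN (x y : gT) : Prop := forall z, cnbhd x z <-> cnbhd y z.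

Definition Vstar (x : gT) : Prop := x <> 1.

End PowerGraph.

From Pilot Require Import Defs.
From mathcomp Require Import all_boot all_fingroup.
From mathcomp Require Import boolp.
From Stdlib Require Import Relations.

Set Implicit Arguments.
Unset Strict Implicit.
Unset Printing Implicit Defensive.

(* N-equivalent vertices have the same closed neighbourhood, so each one lies
   in the closed neighbourhood of the other: N-classes are cliques.  Hence the
   projection is tame, and it is locally strong because an edge leaving a
   class leaves every member of that class.  A tame projection identifies
   paths up to moving inside cliques, so it induces a bijection between the
   connected components of the graph and those of the quotient. *)

Lemma leq_card_imset_kernel (aT rT1 rT2 : finType) (A : {set aT})
    (f : aT -> rT1) (g : aT -> rT2) :
  {in A &, forall x y, g x = g y -> f x = f y} -> #|f @: A| <= #|g @: A|.
Proof.
move=> gf.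
case: (set_0Vmem A) => [->|[x0 Ax0]]; first by rewrite !imset0 cards0.
pose h z := f (odflt x0 [pick x in A | g x == z]).
suff -> : f @: A = h @: (g @: A) by apply: leq_imset_card.
rewrite -imset_comp; apply: eq_in_imset => x Ax /=.
rewrite /h; case: pickP => [y /andP[Ay /eqP gyx] | /(_ x)]; last by rewrite Ax eqxx.
exact: gf.
Qed.

Lemma card_imset_kernel (aT rT1 rT2 : finType) (A : {set aT})
    (f : aT -> rT1) (g : aT -> rT2) :
  {in A &, forall x y, f x = f y <-> g x = g y} -> #|f @: A| = #|g @: A|.
Proof.
move=> fg; apply/eqP; rewrite eqn_leq.
by rewrite !leq_card_imset_kernel // => x y Ax Ay /fg; apply.
Qed.

Section Connectivity.
Variables (T : finType) (V : T -> Prop) (E : T -> T -> Prop).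
Hypothesis E_sym : forall x y, E x y -> E y x.

Local Notation joined := (joined V E).

Lemma joined_edge x y : V x -> V y -> x = y \/ E x y -> joined x y.
Proof. by move=> Vx Vy [->|Exy]; [apply: rt_refl | apply: rt_step]. Qed.

Lemma joined_sym x y : joined x y -> joined y x.
Proof.
elim=> [a b [Va [Vb /E_sym Eba]] | a | a b c _ jba _ jcb].
- exact: rt_step.
- exact: rt_refl.
- exact: rt_trans jcb jba.
Qed.

Lemma component_eq x y : component V E x = component V E y <-> joined x y.
Proof.
have mem_component z w : (w \in component V E z) = `[< joined z w >] by rewrite inE.
split=> [eq_xy | jxy].
  by apply/asboolP; rewrite -mem_component eq_xy mem_component; apply/asboolP/rt_refl.
apply/setP=> z; rewrite !mem_component; apply/asboolP/asboolP => [jxz | jyz].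
  exact: rt_trans (joined_sym jxy) jxz.
exact: rt_trans jxy jyz.
Qed.

End Connectivity.

Section QuotientGraph.
Variables (T : finType) (V : T -> Prop) (E eqv : T -> T -> Prop).
Hypothesis E_sym : forall x y, E x y -> E y x.
Hypothesis eqv_equiv : equivalence T eqv.

Local Notation joined := (joined V E).
Local Notation qcls := (qcls V eqv).
Local Notation qjoined := (Defs.joined (qV V eqv) (qE E)).

Lemma mem_qcls x y : y \in qcls x <-> V y /\ eqv x y.
Proof. by rewrite inE; split=> /asboolP. Qed.

Lemma qcls_id x : V x -> x \in qcls x.
Proof. by move=> Vx; apply/mem_qcls; split; last by apply: equiv_refl. Qed.

Lemma qcls_eq x y : V y -> eqv x y -> qcls x = qcls y.
Proof.
have [_ eqv_trans eqv_sym] := eqv_equiv.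
move=> Vy exy; apply/setP=> z.
apply/idP/idP => /mem_qcls[Vz e]; apply/mem_qcls; split=> //.
  exact: eqv_trans (eqv_sym _ _ exy) e.
exact: eqv_trans exy e.
Qed.

Lemma qE_sym C D : qE E C D -> qE E D C.
Proof.
case=> a [b [Ca [Db ab]]]; exists b, a; do !split=> //.
by case: ab => [->|/E_sym]; [left | right].
Qed.

Section Tame.
Hypothesis eqv_tame : tame V E eqv.

Lemma joined_qcls x y : V x -> V y -> joined x y <-> qjoined (qcls x) (qcls y).
Proof.
move=> Vx Vy; split.
  elim=> [a b [Va [Vb Eab]] | a | a b c _ jab _ jbc].
  - apply: rt_step; split; first by exists a.
    split; first by exists b.
    by exists a, b; split; [apply: qcls_id | split; [apply: qcls_id | right]].
  - exact: rt_refl.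
  - exact: rt_trans jab jbc.
move=> /(clos_rt_rt1n _ _ _ _) jxy.
move Ex: (qcls x) jxy => C; move Ey: (qcls y) => D jCD.
elim: jCD x Ex Vx Ey => [C0 | C0 C1 D0 [_ [[z [Vz ->]] qEC]] _ jzy] x Ex Vx Ey.
  by apply: eqv_tame => //; rewrite Ex Ey.
apply: rt_trans (jzy z erefl Vz Ey).
(* lift the quotient edge to an edge a -- b and move inside the classes by tameness *)
case: qEC => a [b []]; rewrite -Ex => /mem_qcls[Va exa] [/mem_qcls[Vb ezb] ab].
apply: rt_trans (eqv_tame Vx Va (qcls_eq Va exa)) _.
apply: rt_trans (joined_edge Va Vb ab) _.
exact: eqv_tame Vb Vz (esym (qcls_eq Vb ezb)).
Qed.

Lemma tame_ncomp : ncomp V E = ncomp (qV V eqv) (qE E).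
Proof.
rewrite /ncomp.
have -> : [set C | `[< qV V eqv C >]] = qcls @: [set x | `[< V x >]].
  apply/setP=> C; rewrite inE; apply/asboolP/imsetP => [[x [Vx ->]] | [x]].
    by exists x; rewrite // inE; apply/asboolP.
  by rewrite inE => /asboolP Vx ->; exists x.
rewrite -imset_comp; apply: card_imset_kernel => x y.
rewrite !inE => /asboolP Vx /asboolP Vy /=.
apply: iff_trans (component_eq V E_sym x y) _.
apply: iff_trans (joined_qcls Vx Vy) _.
exact: iff_sym (component_eq _ qE_sym _ _).
Qed.

End Tame.

Section ClosedNeighbourhood.
Hypothesis eqv_nbhd : forall x y z, eqv x y -> x = z \/ E x z -> y = z \/ E y z.

Lemma eqv_adj x y : eqv x y -> x = y \/ E x y.
Proof.
have [_ _ eqv_sym] := eqv_equiv.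
by move=> /eqv_sym/eqv_nbhd; apply; left.
Qed.

Lemma nbhd_tame : tame V E eqv.
Proof.
move=> x y Vx Vy eq_xy.
have /mem_qcls[_ /eqv_adj exy] : y \in qcls x by rewrite eq_xy qcls_id.
exact: joined_edge.
Qed.

Lemma nbhd_pseudo_covering : pseudo_covering V E eqv.
Proof.
have [_ eqv_trans eqv_sym] := eqv_equiv.
split=> [C [x [Vx ->]] | x1 x2 _ _ [a [b [/mem_qcls[_ ea] [Cb ab]]]] y1 /mem_qcls[_ ey]].
  by exists x.
exists b; split=> //.
exact: eqv_nbhd (eqv_trans _ _ _ (eqv_sym _ _ ea) ey) ab.
Qed.

End ClosedNeighbourhood.
End QuotientGraph.

Section PowerGraph.
Variable gT : finGroupType.

Lemma padj_sym (x y : gT) : padj x y -> padj y x.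
Proof. by case=> ne [] pxy; split; auto. Qed.

Lemma relN_equivalence : equivalence gT (@relN gT).
Proof.
split=> [x z | x y z Nxy Nyz w | x y Nxy z] //.
  exact: iff_trans (Nxy w) (Nyz w).
exact: iff_sym (Nxy z).
Qed.

Lemma relN_cnbhd (x y z : gT) : relN x y -> x = z \/ padj x z -> y = z \/ padj y z.
Proof.
move=> Nxy xz; have /Nxy[->|] : cnbhd x z by case: xz => [->|]; [left | right].
  by left.
by right.
Qed.

End PowerGraph.

Theorem mainTheorem18 (gT : finGroupType) :
  tame (@Vstar gT) (@padj gT) (@relN gT) /\
  pseudo_covering (@Vstar gT) (@padj gT) (@relN gT) /\
  ncomp (@Vstar gT) (@padj gT) =
  ncomp (qV (@Vstar gT) (@relN gT)) (qE (@padj gT)).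
Proof.
have relN_equiv := @relN_equivalence gT.
have tameN : tame (@Vstar gT) (@padj gT) (@relN gT).
  exact: nbhd_tame relN_equiv (@relN_cnbhd gT).
split=> //; split; first exact: nbhd_pseudo_covering relN_equiv (@relN_cnbhd gT).
exact: tame_ncomp (@padj_sym gT) relN_equiv tameN.
Qed.
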